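(* Let $q\in[u]$ be a key and $\ell\ge0$ an integer. If the run containing position $h(q)$ has length $r\in[2^{\ell+2},2^{\ell+3})$, then at least one of the following (at most 12) consecutive $\ell$-intervals is near-full: the $\ell$-interval containing $h(q)$, the 8 nearest $\ell$-intervals to its left, and the 3 nearest $\ell$-intervals to its right.
   Context: Let $[s]=\{0,\dots,s-1\}$. Linear probing: fix a table size $t$ and a hash function $h:[u]\to[t]$. Positions are indexed by nonnegative integers (wrap-around is ignored, so positions beyond $t-1$ may be used), each either empty or holding one key. Starting from an empty table, the keys of a set $S\subseteq[u]$ are inserted one by one; a key $x$ is inserted by scanning positions $h(x),h(x)+1,\dots$ and placing $x$ in the first empty one. A run is a maximal interval of consecutive filled positions. For an integer $\ell\ge 0$, an $\ell$-interval is a set of positions $[i2^\ell,(i+1)2^\ell)$ for an integer $i\ge 0$. Given a query key $q\in[u]$ (which may or may not belong to $S$), an $\ell$-interval $I$ is called near-full if at least $\frac34 2^\ell$ keys $x\in S\setminus\{q\}$ satisfy $h(x)\in I$. *)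

From mathcomp Require Import all_boot.
Set Implicit Arguments. Unset Strict Implicit. Unset Printing Implicit Defensive.

(* The table state is represented by the sequence of filled positions. *)

(* Among the positions
   s, s+1, ..., s + size occ at least one is empty (pigeonhole), so the
   [find] below always succeeds and returns the least i with s+i empty. *)
Definition first_empty (occ : seq nat) (s : nat) : nat :=
  s + find (fun i => s + i \notin occ) (iota 0 (size occ).+1).

Definition lp_insert (h : nat -> nat) (occ : seq nat) (x : nat) : seq nat :=
  rcons occ (first_empty occ (h x)).

Definition lp_table (h : nat -> nat) (S : seq nat) : seq nat :=
  foldl (lp_insert h) [::] S.

Definition run_of_length (occ : seq nat) (p r : nat) : Prop :=
  exists a : nat,
    [/\ a <= p < a + r,
        (forall i, a <= i < a + r -> i \in occ),
        (a = 0 \/ a.-1 \notin occ) &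
        a + r \notin occ].

Definition interval_load (h : nat -> nat) (S : seq nat) (q l j : nat) : nat :=
  count (fun x => (x != q) && (j * 2 ^ l <= h x < j.+1 * 2 ^ l)) S.

Definition near_full (h : nat -> nat) (S : seq nat) (q l j : nat) : Prop :=
  3 * 2 ^ l <= 4 * interval_load h S q l j.

(* A run of length r >= 4 * 2^l starting at position a covers the whole block of
   four l-intervals beginning with the one containing a, except for fewer than
   2^l positions before a.  Every key stored in a run was hashed inside it (its
   probe sequence cannot have crossed the empty position a - 1), so more than
   3 * 2^l keys hash into that block, at least 3 * 2^l of them different from q.
   By pigeonhole one of the four l-intervals is near-full, and since
   h q < a + 8 * 2^l the block lies within the twelve intervals around h q. *)
From mathcomp Require Import all_boot zify.

Set Implicit Arguments.
Unset Strict Implicit.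

Lemma first_empty_spec (occ : seq nat) (s : nat) :
  [/\ s <= first_empty occ s, first_empty occ s \notin occ &
      forall z, s <= z < first_empty occ s -> z \in occ].
Proof.
rewrite /first_empty; set P := fun i => s + i \notin occ.
have hasP : has P (iota 0 (size occ).+1).
  apply/negPn/negP => /hasPn noP.
  suff : size (iota s (size occ).+1) <= size occ by rewrite size_iota ltnn.
  apply: uniq_leq_size (iota_uniq _ _) _ => z; rewrite mem_iota => /andP[sz zs].
  have := noP (z - s); rewrite mem_iota /P subnKC // => /(_ _)/negPn; apply; lia.
have find_lt : find P (iota 0 (size occ).+1) < (size occ).+1.
  by rewrite -[X in _ < X](size_iota 0) -has_find.
split; first exact: leq_addr.
- by have := nth_find 0 hasP; rewrite /P nth_iota.
- move=> z /andP[sz zlt].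
  have := @before_find _ 0 P (iota 0 (size occ).+1) (z - s) ltac:(lia).
  by rewrite /P nth_iota ?add0n ?subnKC //; [move/negbFE | lia].
Qed.

Lemma lp_table_spec (h : nat -> nat) (S : seq nat) :
  let occ := lp_table h S in
  [/\ size occ = size S, uniq occ &
      forall x y, (x, y) \in zip S occ ->
        h x <= y /\ forall z, h x <= z < y -> z \in occ].
Proof.
elim/last_ind: S => [|S x [sizeS uniqS probeS]] //=.
rewrite /lp_table foldl_rcons -/(lp_table h S) /lp_insert.
have [hx_le empty filled] := first_empty_spec (lp_table h S) (h x).
split; first by rewrite !size_rcons sizeS.
- by rewrite rcons_uniq empty.
- move=> x' y'; rewrite zip_rcons // mem_rcons inE => /orP[/eqP[-> ->] | /probeS].
  + by split=> // z /filled zin; rewrite mem_rcons inE zin orbT.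
  + by case=> le_hy before; split=> // z /before zin; rewrite mem_rcons inE zin orbT.
Qed.

Lemma count_filled_le_count_hashed (h : nat -> nat) (S : seq nat) (a b : nat) :
  (a = 0 \/ a.-1 \notin lp_table h S) ->
  count (fun y => a <= y < b) (lp_table h S) <= count (fun x => a <= h x < b) S.
Proof.
move=> a_start; have [sizeS _ probeS] := lp_table_spec h S.
set occ := lp_table h S in a_start sizeS probeS *.
have -> : count (fun y => a <= y < b) occ
          = count (fun p => (p \in zip S occ) && (a <= p.2 < b)) (zip S occ).
  rewrite -[in LHS](@unzip2_zip _ _ S occ) ?sizeS // count_map.
  by apply: eq_in_count => p ->.
rewrite -[in leqRHS](@unzip1_zip _ _ S occ) ?sizeS // count_map.
apply: sub_count => -[x y] /= /andP[/probeS [hx_le before] /andP[a_le y_lt]].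
rewrite (leq_ltn_trans hx_le y_lt) andbT leqNgt; apply/negP => hx_lt.
case: a_start => [a0 | /negP]; first by rewrite a0 in hx_lt.
by apply; apply: before; lia.
Qed.

Lemma count_range_filled (occ : seq nat) (a b : nat) :
  uniq occ -> (forall i, a <= i < b -> i \in occ) ->
  b - a <= count (fun y => a <= y < b) occ.
Proof.
move=> uniq_occ filled; rewrite -size_filter -[leqLHS](size_iota a).
apply: uniq_leq_size (iota_uniq _ _) _ => i; rewrite mem_iota mem_filter => range_i.
by rewrite filled; lia.
Qed.

Lemma count_drop_key (T : eqType) (p : pred T) (s : seq T) (q : T) :
  uniq s -> count p s <= count (fun x => (x != q) && p x) s + 1.
Proof.
move=> uniq_s; set p' := fun x => (x != q) && p x.
have p_sub : count p s <= count (predU p' (pred1 q)) s.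
  by apply: sub_count => x px; rewrite /= /p' px andbT; case: eqP.
apply: (leq_trans p_sub).
apply: leq_trans (leq_addr (count (predI p' (pred1 q)) s) _) _.
by rewrite count_predUI leq_add2l count_uniq_mem ?leq_b1.
Qed.

Lemma count_range_split (T : Type) (P : pred T) (f : T -> nat) (m n p : nat) (s : seq T) :
  m <= n <= p ->
  count (fun x => P x && (m <= f x < p)) s
  = count (fun x => P x && (m <= f x < n)) s + count (fun x => P x && (n <= f x < p)) s.
Proof.
by move=> /andP[mn np]; elim: s => //= x s ->; case: (P x) => //=; lia.
Qed.

Lemma count_hashed_in_block (h : nat -> nat) (S : seq nat) (q l j k : nat) :
  count (fun x => (x != q) && (j * 2 ^ l <= h x < (j + k) * 2 ^ l)) S
  = \sum_(j <= i < j + k) interval_load h S q l i.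
Proof.
elim: k => [|k IH].
  rewrite addn0 big_geq // -(count_pred0 S); apply: eq_count => x.
  by case: leqP; rewrite ?andbF.
rewrite addnS big_nat_recr ?leq_addr //= -IH /interval_load.
rewrite (@count_range_split _ _ _ _ ((j + k) * 2 ^ l)) //.
by rewrite !leq_mul2r leq_addr leqnSn !orbT.
Qed.

Lemma exists_near_full (h : nat -> nat) (S : seq nat) (q l j k : nat) :
  0 < k -> 3 * k * 2 ^ l <= 4 * \sum_(j <= i < j + k) interval_load h S q l i ->
  exists2 i, j <= i < j + k & near_full h S q l i.
Proof.
move=> k_gt0 heavy.
set nf := fun i => 3 * 2 ^ l <= 4 * interval_load h S q l i.
have [/hasP[i] | /hasPn light] := boolP (has nf (index_iota j (j + k))).
  by rewrite mem_index_iota; exists i.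
have : \sum_(j <= i < j + k) (4 * interval_load h S q l i + 1)
       <= \sum_(j <= i < j + k) 3 * 2 ^ l.
  rewrite big_seq [leqRHS]big_seq; apply: leq_sum => i /light.
  by rewrite /nf -ltnNge addn1.
rewrite big_split -big_distrr /= !sum_nat_const_nat addKn; lia.
Qed.

Lemma run_start_block_heavy (h : nat -> nat) (S : seq nat) (q l a : nat) :
  uniq S -> (a = 0 \/ a.-1 \notin lp_table h S) ->
  (forall i, a <= i < a + 4 * 2 ^ l -> i \in lp_table h S) ->
  3 * 4 * 2 ^ l <= 4 * \sum_(a %/ 2 ^ l <= i < a %/ 2 ^ l + 4) interval_load h S q l i.
Proof.
move=> uniqS a_start filled.
have [_ uniq_table _] := lp_table_spec h S.
set i0 := a %/ 2 ^ l; set b := (i0 + 4) * 2 ^ l.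
have i0_le : i0 * 2 ^ l <= a := leq_divM a (2 ^ l).
have a_lt : a < i0.+1 * 2 ^ l by rewrite ltn_ceil ?expn_gt0.
have b_lb : 3 * 2 ^ l < b - a by move: a_lt; rewrite /b mulnDl mulSn; lia.
have covered : forall i, a <= i < b -> i \in lp_table h S.
  by move=> i range_i; apply: filled; move: range_i; rewrite /b mulnDl; lia.
have block_load : 3 * 2 ^ l < count (fun x => i0 * 2 ^ l <= h x < b) S.
  apply: (leq_trans b_lb); apply: (leq_trans (count_range_filled uniq_table covered)).
  apply: (leq_trans (count_filled_le_count_hashed b a_start)).
  by apply: sub_count => x /andP[a_le ->]; rewrite (leq_trans i0_le a_le).
rewrite -count_hashed_in_block -/b.
by have := leq_trans block_load (count_drop_key _ q uniqS); lia.
Qed.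

Theorem lemma3 (u t : nat) (h : nat -> nat) (S : seq nat) (q l r : nat) :
  (forall x, x < u -> h x < t) ->
  uniq S -> all (fun x => x < u) S ->
  q < u ->
  run_of_length (lp_table h S) (h q) r ->
  2 ^ (l + 2) <= r < 2 ^ (l + 3) ->
  exists j : nat,
    h q %/ 2 ^ l - 8 <= j <= h q %/ 2 ^ l + 3 /\ near_full h S q l j.
Proof.
move=> _ uniqS _ _ [a [/andP[a_le_hq hq_lt] filled a_start _]].
rewrite !expnD (_ : 2 ^ 2 = 4) // (_ : 2 ^ 3 = 8) // => /andP[r_ge r_lt].
have heavy := @run_start_block_heavy h S q l a uniqS a_start.
have [|j /andP[j_ge j_lt] near_full_j] := exists_near_full (isT : 0 < 4) (heavy _).
  by move=> i /andP[a_le i_lt]; apply: filled; lia.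
exists j; split=> //.
have hq_div_ge : a %/ 2 ^ l <= h q %/ 2 ^ l := leq_div2r _ a_le_hq.
have hq_div_le : h q %/ 2 ^ l <= a %/ 2 ^ l + 8.
  have : h q <= 8 * 2 ^ l + a by lia.
  by move/(leq_div2r (2 ^ l)); rewrite divnMDl ?expn_gt0 // addnC.
lia.
Qed.
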